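(* Let $n\ge0$ and $i,j\in D$. Suppose that for $m=1,\dots,r$ we are given $a_m,b_m\in D$ with $a_m\neq b_m$, $a_m\Rightarrow_n b_m$ and $A_i(a_m)=1$, and that $A_i(c)\le A_j(c)$ for all $c\notin\{a_m: m=1,\dots,r\}$. Define $\hat A_i\in\{0,1\}^D$ by $\hat A_i(c)=A_i(c)$ if $c\notin\{a_m,b_m: m=1,\dots,r\}$, $\hat A_i(c)=0$ if $c=a_m$ for some $m$, and $\hat A_i(c)=1$ if $c=b_m$ for some $m$. If $\hat A_i\le A_j$ entrywise, then $i\Rightarrow_{n+1} j$.
   Context: Fix integers $k\ge1$, $d\ge1$, $K=\{1,\dots,k\}$, $D=\{1,\dots,d\}$. The $k$-tree is the set $K^*$ of finite words over $K$ with root the empty word $\epsilon$; $xg$ ($g\in K$) are the children of $x$. $L_n$ is the set of words of length exactly $n$ and $\Delta_n$ the set of words of length at most $n$. $A$ is a $d\times d$ matrix with entries in $\{0,1\}$, and $A_i(m)=A(i,m)$ denotes the entries of row $i$. A (valid) labeling of $\Delta_n$ is a map $\lambda:\Delta_n\to D$ with $A(\lambda(x),\lambda(xg))=1$ for all $x\in\Delta_{n-1}$, $g\in K$. For $p,q\in D$, $p\Rightarrow_n q$ means: for every valid labeling $\lambda$ of $\Delta_n$ with $\lambda(\epsilon)=p$ there is a valid labeling $\lambda'$ of $\Delta_n$ with $\lambda'(\epsilon)=q$ and $\lambda'|_{L_n}=\lambda|_{L_n}$.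
   Formalization: $\hat A_i(c)$ is 1 whenever c is some $b_m$, even when c also lies in $\{a_m: m=1,\dots,r\}$, so the value 1 at the $b_m$ takes precedence over the value 0 at the $a_m$. The statement above fails without it. *)

From mathcomp Require Import all_boot.
Set Implicit Arguments. Unset Strict Implicit. Unset Printing Implicit Defensive.

(* K = 'I_k (letters), D = 'I_d (labels).  Words of the k-tree are
   sequences over 'I_k; the children of x are x ++ [g] = rcons x g.
   The 0/1 matrix A is a boolean relation A p q  (A(p,q) = 1 <-> A p q). *)

(* A labeling of Delta_n is represented by a total map on all words; only
   its values on words of length <= n matter in every definition below. *)
Definition valid_labeling (k d : nat) (A : 'I_d -> 'I_d -> bool) (n : nat)
  (lam : seq 'I_k -> 'I_d) : Prop :=
  forall x : seq 'I_k, size x < n -> forall g : 'I_k, A (lam x) (lam (rcons x g)).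

Definition implies_n (k d : nat) (A : 'I_d -> 'I_d -> bool) (n : nat)
  (p q : 'I_d) : Prop :=
  forall lam : seq 'I_k -> 'I_d,
    valid_labeling A n lam -> lam [::] = p ->
    exists lam' : seq 'I_k -> 'I_d,
      [/\ valid_labeling A n lam', lam' [::] = q &
          forall x : seq 'I_k, size x = n -> lam' x = lam x].

(* \hat A_i : 1 on the b_m, 0 on the a_m, A_i elsewhere
   (b-values take precedence if some a_m equals some b_m'). *)
Definition hatA (d r : nat) (A : 'I_d -> 'I_d -> bool) (i : 'I_d)
  (a b : 'I_r -> 'I_d) (c : 'I_d) : bool :=
  if c \in codom b then true
  else if c \in codom a then false
  else A i c.

From mathcomp Require Import all_boot.

(* A labeling of the depth-(n+1) tree rooted at i consists of k labelings of
   depth n, rooted at children labels c with A_i(c).  To reroot it at j it is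
   enough to reroot every subtree independently: a subtree rooted at a_m is
   moved to b_m using a_m =>_n b_m, every other subtree is kept.  The new
   children labels are then exactly the c with \hat A_i(c) = 1 (or A_i(c) = 1
   outside the a_m and b_m), which \hat A_i <= A_j allows below j. *)

Section Grafting.

Variables (k d : nat) (A : 'I_d -> 'I_d -> bool).

Definition graft (p : 'I_d) (L : 'I_k -> seq 'I_k -> 'I_d) (x : seq 'I_k) :=
  if x is g :: y then L g y else p.

Lemma valid_labeling_subtree {n} {lam : seq 'I_k -> 'I_d} (g : 'I_k) :
  valid_labeling A n.+1 lam -> valid_labeling A n (fun y => lam (g :: y)).
Proof. by move=> lamV y ltyn; apply: (lamV (g :: y)). Qed.

Lemma valid_labeling_graft n p (L : 'I_k -> seq 'I_k -> 'I_d) :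
  (forall g, valid_labeling A n (L g)) -> (forall g, A p (L g [::])) ->
  valid_labeling A n.+1 (graft p L).
Proof. by move=> LV rootL [|g y] ltyn h //=; apply: LV. Qed.

Lemma implies_n_refl n (p : 'I_d) : implies_n k A n p p.
Proof. by move=> lam lamV lam0; exists lam. Qed.

Lemma implies_nS n (p q : 'I_d) :
  (forall c, A p c -> exists2 c', A q c' & implies_n k A n c c') ->
  implies_n k A n.+1 p q.
Proof.
move=> children lam lamV lam0.
have rerooted g : exists L : seq 'I_k -> 'I_d,
    [/\ valid_labeling A n L, A q (L [::]) &
        forall y, size y = n -> L y = lam (g :: y)].
  have Apc : A p (lam [:: g]) by rewrite -lam0; apply: (lamV [::]).
  have [c' Aqc' /(_ _ (valid_labeling_subtree g lamV) erefl)] := children _ Apc.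
  by case=> L [LV L0 Lleaves]; exists L; rewrite ?L0.
have [L LP] := fin_all_exists rerooted.
exists (graft q L); split=> //.
- by apply: valid_labeling_graft => g; case: (LP g).
- by move=> [|g y] //= [sizey]; case: (LP g) => _ _; apply.
Qed.

End Grafting.

Theorem proposition3p6 (k d : nat) (A : 'I_d -> 'I_d -> bool) (n : nat)
  (i j : 'I_d) (r : nat) (a b : 'I_r -> 'I_d) :
  0 < k ->
  (forall m : 'I_r, a m != b m) ->
  (forall m : 'I_r, implies_n k A n (a m) (b m)) ->
  (forall m : 'I_r, A i (a m)) ->
  (forall c : 'I_d, c \notin codom a -> A i c ==> A j c) ->
  (forall c : 'I_d, hatA A i a b c ==> A j c) ->
  implies_n k A n.+1 i j.
Proof.
(* A_i <= A_j off the a_m is implied by \hat A_i <= A_j. *)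
move=> _ _ ab_imp _ _ hatA_le.
apply: implies_nS => c Aic.
case: (boolP (c \in codom a)) => [/codomP [m ->] | c_notin_a].
- exists (b m) => //.
  by have := hatA_le (b m); rewrite /hatA codom_f.
- exists c; last exact: implies_n_refl.
  have := hatA_le c; rewrite /hatA (negbTE c_notin_a).
  by case: (c \in codom b); rewrite //= Aic.
Qed.
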